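(* For all $m,t\in\mathbb{N}$ and $1\leq r\leq m$, \[ R_t(r,m)\leq \left(1-\frac{1}{2^t}\right)2^m -\frac{\sqrt{2^t-1}}{2^t}\binom{m}{r}. \]
   Context: For a $t\times n$ matrix $\mathbf{v}$ over $\mathbb{F}_2$ with rows $\overline{v}_1,\dots,\overline{v}_t$, $\mathrm{wt}^{(t)}(\mathbf{v})=\left|\bigcup_{i} \mathrm{supp}(\overline{v}_i)\right|$ and $d^{(t)}(\mathbf{u},\mathbf{v})=\mathrm{wt}^{(t)}(\mathbf{u}-\mathbf{v})$. For a linear code $C\subseteq\mathbb{F}_2^n$, $C^t$ is the set of $t\times n$ matrices all of whose rows lie in $C$, and $R_t(C)$ is the smallest integer $\rho$ such that for every $\mathbf{v}\in\mathbb{F}_2^{t\times n}$ some $\mathbf{c}\in C^t$ has $d^{(t)}(\mathbf{v},\mathbf{c})\le\rho$. Reed–Muller codes $\mathrm{RM}(r,m)\subseteq\mathbb{F}_2^{2^m}$: $\mathrm{RM}(0,m)=\{\overline{0},\overline{1}\}$, $\mathrm{RM}(m,m)=\mathbb{F}_2^{2^m}$, and for $1\leq r\leq m-1$, $\mathrm{RM}(r,m)=\{(\overline{u},\overline{u}+\overline{v}) : \overline{u}\in \mathrm{RM}(r,m-1),\ \overline{v}\in\mathrm{RM}(r-1,m-1)\}$. $R_t(r,m)=R_t(\mathrm{RM}(r,m))$. *)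

From Stdlib Require Import Reals.
From mathcomp Require Import all_boot.

Set Implicit Arguments.
Unset Strict Implicit.
Unset Printing Implicit Defensive.

Definition word (n : nat) := n.-tuple bool.

(* Reed--Muller membership on raw bit sequences, following the (u | u+v)
   recursion:  RM(0,m) = {0,1},  RM(m,m) = F_2^{2^m},
   RM(r,m) = {(u, u+v) : u in RM(r,m-1), v in RM(r-1,m-1)} for 1 <= r <= m-1. *)
Fixpoint inRM (r m : nat) (w : seq bool) : bool :=
  match m with
  | 0 => size w == 1
  | m'.+1 =>
      if r == 0 then (size w == 2 ^ m) &&
                     ((w == nseq (2 ^ m) false) || (w == nseq (2 ^ m) true))
      else if m <= r then size w == 2 ^ m
      else let u := take (2 ^ m') w in
           let uv := drop (2 ^ m') w in
           (size w == 2 ^ m) && inRM r m' u &&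
           inRM r.-1 m' [seq x.1 (+) x.2 | x <- zip u uv]
  end.

Definition RM (r m : nat) : {pred word (2 ^ m)} := fun w => inRM r m (tval w).

Definition mat (t n : nat) := {ffun 'I_t -> word n}.

(* wt^(t)(u - v) = size of the union of supports of the rows of u - v
   (over F_2, u - v = u xor v). *)
Definition dist_t (t n : nat) (u v : mat t n) : nat :=
  #|[set j : 'I_n | [exists i : 'I_t, tnth (u i) j != tnth (v i) j]]|.

Definition rows_in (t n : nat) (C : {pred word n}) (c : mat t n) : bool :=
  [forall i : 'I_t, c i \in C].

Definition covers (t n : nat) (C : {pred word n}) (rho : nat) : bool :=
  [forall v : mat t n, [exists c : mat t n, rows_in C c && (dist_t v c <= rho)]].

(* Since all
   distances are <= n, if any rho works then some rho <= n works, so the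
   search over 0..n returns exactly the least such rho. *)
Definition Rt (t n : nat) (C : {pred word n}) : nat :=
  find (covers t C) (iota 0 n.+1).

Arguments RM : clear implicits.
Definition Rt_RM (t r m : nat) : nat := Rt t (RM r m).

(* Write dist(v, c) = 2^m - #{positions where every row of c agrees with v}.
   For each v we build c in RM(r,m)^t with at least
     2^m / 2^t + sqrt(2^t - 1) / 2^t * C(m,r)
   agreeing positions.  The Plotkin construction (u | u + w) splits the
   problem into an RM(r,m-1) problem on the left half and an RM(r-1,m-1)
   problem on the right half (against v_right + u), so these bounds add up
   along Pascal's rule.  For RM(m,m) agreement is total.  For RM(1,m) we pick
   the rows greedily: by Parseval's identity for the Walsh-Hadamard transform
   some affine function agrees with the current row on at least (s + sqrt s)/2
   of the s positions still in agreement, and after t rows this leaves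
   (2^m + sqrt(2^m (2^t - 1))) / 2^t >= 2^m / 2^t + m sqrt(2^t - 1) / 2^t
   positions, since m <= sqrt(2^m) for m <> 3; for m = 3 the integrality of
   the first step compensates. *)

From Stdlib Require Import Reals Psatz.
From mathcomp Require Import all_boot ssralg ssrnum ssrint zify.
Import GRing.Theory Num.Theory.

Set Implicit Arguments.
Unset Strict Implicit.
Unset Printing Implicit Defensive.

Section ZipWith.
Variables (A B C : Type) (f : A -> B -> C).

Definition zipwith (s : seq A) (t : seq B) : seq C := [seq f x.1 x.2 | x <- zip s t].

Lemma zipwith_cons x y s t : zipwith (x :: s) (y :: t) = f x y :: zipwith s t.
Proof. by []. Qed.

Lemma size_zipwith s t : size (zipwith s t) = minn (size s) (size t).
Proof. by rewrite size_map size_zip. Qed.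

Lemma zipwith_cat s1 s2 t1 t2 : size s1 = size t1 ->
  zipwith (s1 ++ s2) (t1 ++ t2) = zipwith s1 t1 ++ zipwith s2 t2.
Proof. by move=> eq_s1t1; rewrite /zipwith zip_cat // map_cat. Qed.

Lemma nth_zipwith a b c s t j : size s = size t -> j < size s ->
  nth c (zipwith s t) j = f (nth a s j) (nth b t j).
Proof.
by move=> eq_st lt_j; rewrite (nth_map (a, b)) ?size_zip -?eq_st ?minnn // nth_zip.
Qed.

End ZipWith.

Arguments zipwith : simpl never.

Notation xorw := (zipwith addb).
Notation andw := (zipwith andb).
Notation eqw := (zipwith (fun x y : bool => x == y)).

Lemma xorwK u w : size u = size w -> xorw u (xorw u w) = w.
Proof. by elim: u w => [|x u IH] [|y w] //= [/IH]; rewrite !zipwith_cons addKb => ->. Qed.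

Lemma eqw_xorwr v u w : size v = size u -> size u = size w ->
  eqw v (xorw u w) = eqw (xorw v u) w.
Proof.
elim: v u w => [|x v IH] [|y u] [|z w] //= [eq_vu] [eq_uw].
by rewrite !zipwith_cons IH //; case: x; case: y; case: z.
Qed.

Lemma eqw_refl v : eqw v v = nseq (size v) true.
Proof. by elim: v => [|x v IH] //=; rewrite zipwith_cons IH eqxx. Qed.

Lemma andw_true S : andw S (nseq (size S) true) = S.
Proof. by elim: S => [|x S IH] //=; rewrite zipwith_cons IH andbT. Qed.

Lemma xorw_addb a b w :
  xorw (map (addb b) w) (map (addb b) (map (addb a) w)) = nseq (size w) a.
Proof. by elim: w => [|x w IH] //=; rewrite zipwith_cons IH; case: (a); case: (b); case: (x). Qed.

Definition sized (n : nat) (vs : seq (seq bool)) := all (fun w => size w == n) vs.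

Lemma sized_take h vs : sized (h + h) vs -> sized h (map (take h) vs).
Proof.
elim: vs => [|v vs IH] //= /andP [/eqP sz_v /IH ->].
by rewrite size_takel ?sz_v ?leq_addr ?eqxx.
Qed.

Lemma sized_drop h vs : sized (h + h) vs -> sized h (map (drop h) vs).
Proof.
by elim: vs => [|v vs IH] //= /andP [/eqP sz_v /IH ->]; rewrite size_drop sz_v addnK eqxx.
Qed.

Lemma sized_xorw h us ws : sized h us -> sized h ws -> sized h (zipwith xorw us ws).
Proof.
elim: us ws => [|u us IH] [|w ws] //; rewrite zipwith_cons /=.
move=> /andP [/eqP sz_u sz_us] /andP [/eqP sz_w sz_ws].
by rewrite size_zipwith sz_u sz_w minnn eqxx IH.
Qed.

Lemma inRM_rec r m w : 0 < r -> r <= m ->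
  inRM r m.+1 w = [&& size w == 2 ^ m.+1, inRM r m (take (2 ^ m) w)
                    & inRM r.-1 m (xorw (take (2 ^ m) w) (drop (2 ^ m) w))].
Proof. by case: r => // r _ le_rm; rewrite [LHS]/= ltnNge le_rm -andbA. Qed.

Lemma inRM_full r m w : 0 < r -> m.+1 <= r -> inRM r m.+1 w = (size w == 2 ^ m.+1).
Proof. by case: r => // r _ le_mr; rewrite [LHS]/= le_mr. Qed.

Lemma inRM_size r m w : inRM r m w -> size w = 2 ^ m.
Proof.
case: m => [/eqP //|m]; case: r => [/andP [/eqP //]|r].
case: (leqP m.+1 r.+1) => [le_mr | lt_rm].
  by rewrite inRM_full // => /eqP.
by rewrite inRM_rec // => /and3P [/eqP].
Qed.

Lemma inRM0_nseq m b : inRM 0 m (nseq (2 ^ m) b).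
Proof. by case: m => [|m] //=; rewrite size_nseq eqxx; case: b; rewrite eqxx ?orbT. Qed.

Lemma inRM_plotkin r m u w : 0 < r -> r <= m -> inRM r m u -> inRM r.-1 m w ->
  inRM r m.+1 (u ++ xorw u w).
Proof.
move=> r_gt0 le_rm RMu RMw; have sz_u := inRM_size RMu; have sz_w := inRM_size RMw.
rewrite inRM_rec // size_cat size_zipwith sz_u sz_w minnn expnS mul2n -addnn eqxx.
by rewrite take_size_cat // drop_size_cat // xorwK ?sz_u ?sz_w ?RMu.
Qed.

Lemma inRM_diag m w : inRM m m w = (size w == 2 ^ m).
Proof. by case: m => [|m] //; rewrite inRM_full. Qed.

Lemma sized_inRM r m cs : all (inRM r m) cs -> sized (2 ^ m) cs.
Proof. by move=> RMcs; apply/allP => w /(allP RMcs) /inRM_size ->. Qed.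

Lemma all_inRM_plotkin r m us ws : 0 < r -> r <= m -> size us = size ws ->
  all (inRM r m) us -> all (inRM r.-1 m) ws ->
  all (inRM r m.+1) (zipwith cat us (zipwith xorw us ws)).
Proof.
move=> r_gt0 le_rm; elim: us ws => [|u us IH] [|w ws] //; rewrite !zipwith_cons.
move=> [eq_sz] /andP [RMu RMus] /andP [RMw RMws].
by apply/andP; split; [exact: inRM_plotkin | exact: IH].
Qed.


(* Truth table of x |-> <s, x> on F_2^m, the first variable being the most
   significant one, as in the (u | u + v) recursion. *)
Fixpoint lin (m : nat) (s : seq bool) : seq bool :=
  if m is m'.+1 then let w := lin m' (behead s) in w ++ map (addb (head false s)) w
  else [:: false].

Lemma linS m s :
  lin m.+1 s = lin m (behead s) ++ map (addb (head false s)) (lin m (behead s)).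
Proof. by []. Qed.

Lemma size_lin m s : size (lin m s) = 2 ^ m.
Proof. by elim: m s => [|m IH] s //=; rewrite size_cat size_map IH expnS mul2n addnn. Qed.

Lemma inRM1_affine m b s : inRM 1 m.+1 (map (addb b) (lin m.+1 s)).
Proof.
elim: m b s => [|m IH] b s; first by rewrite inRM_full // size_map size_lin.
rewrite inRM_rec // size_map size_lin eqxx linS map_cat.
rewrite take_size_cat ?size_map ?size_lin // IH drop_size_cat ?size_map ?size_lin //.
by rewrite xorw_addb size_lin inRM0_nseq.
Qed.

Section WalshHadamard.
Local Open Scope ring_scope.

Definition corr (ws : seq int) (c : seq bool) : int := \sum_(p <- zip ws c) (-1) ^+ p.2 * p.1.

Lemma corr_cons w ws x c : corr (w :: ws) (x :: c) = (-1) ^+ x * w + corr ws c.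
Proof. by rewrite /corr /= big_cons. Qed.

Lemma corr_cat ws1 ws2 c1 c2 : size ws1 = size c1 ->
  corr (ws1 ++ ws2) (c1 ++ c2) = corr ws1 c1 + corr ws2 c2.
Proof. by move=> eq_sz; rewrite /corr zip_cat // big_cat. Qed.

Lemma corr_addb ws c b : corr ws (map (addb b) c) = (-1) ^+ b * corr ws c.
Proof.
elim: ws c => [|w ws IH] [|x c]; rewrite /corr /= ?big_nil ?mulr0 //.
by rewrite !big_cons -/(corr _ _) IH signr_addb mulrDr !mulrA.
Qed.

Fixpoint bitseqs (m : nat) : seq (seq bool) :=
  if m is m'.+1 then map (cons false) (bitseqs m') ++ map (cons true) (bitseqs m')
  else [:: [::]].

Lemma size_bitseqs m : size (bitseqs m) = (2 ^ m)%N.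
Proof. by elim: m => [|m IH] //=; rewrite size_cat !size_map IH expnS mul2n addnn. Qed.

Lemma parseval m ws : size ws = (2 ^ m)%N ->
  \sum_(s <- bitseqs m) corr ws (lin m s) ^+ 2 = (2 ^ m)%N%:R * \sum_(w <- ws) w ^+ 2.
Proof.
elim: m ws => [|m IH] ws sz_ws.
  by case: ws sz_ws => [|w [|]] // _; rewrite /corr /= !big_seq1 expr0 !mul1r.
have sz_L : size (take (2 ^ m) ws) = (2 ^ m)%N by rewrite size_takel // sz_ws leq_pexp2l.
have sz_R : size (drop (2 ^ m) ws) = (2 ^ m)%N by rewrite size_drop sz_ws expnS mul2n -addnn addnK.
rewrite -(cat_take_drop (2 ^ m) ws) [bitseqs _]/= big_cat /= !big_map -big_split.
under eq_bigr => s _ do rewrite !corr_cat ?size_lin // !corr_addb.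
rewrite (eq_bigr (fun s => 2 * (corr (take (2 ^ m) ws) (lin m s) ^+ 2 +
                                corr (drop (2 ^ m) ws) (lin m s) ^+ 2))); last first.
  by move=> s _ /=; rewrite expr0 expr1 mul1r mulN1r !expr2; nia.
by rewrite -mulr_sumr big_split /= !IH // big_cat /= expnS natrM -mulrA !mulrDr.
Qed.

Lemma exists_ge_mean (T : Type) (F : T -> int) (l : seq T) (W : int) : (0 < size l)%N ->
  (size l)%:R * W <= \sum_(x <- l) F x -> exists x, W <= F x.
Proof.
elim: l => [//|x l IH] _; rewrite big_cons /=.
have [le_WFx|lt_FxW] := lerP W (F x); first by move=> _; exists x.
rewrite -addn1 natrD mulrDl mul1r.
case: l IH => [|y l] IH /=; first by rewrite big_nil mul0r add0r addr0 => le_WFx; exfalso; lia.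
by move=> le_mean; apply: IH => //=; lia.
Qed.

Definition signs (S v : seq bool) : seq int :=
  zipwith (fun (s x : bool) => (s : nat)%:R * (-1) ^+ x) S v.

Lemma sumsq_signs S v : size S = size v -> \sum_(w <- signs S v) w ^+ 2 = (count id S)%:R.
Proof.
elim: S v => [|s S IH] [|x v] //; first by move=> _; rewrite big_nil.
move=> [/IH sumsq]; rewrite /signs zipwith_cons big_cons -/(signs _ _) sumsq /= natrD.
by case: (s); case: (x); rewrite ?expr0 ?expr1; lia.
Qed.

Lemma corr_signs S v c : size S = size v -> size v = size c ->
  corr (signs S v) c = 2 * (count id (andw S (eqw v c)))%:R - (count id S)%:R.
Proof.
elim: S v c => [|s S IH] [|x v] [|y c] //; first by move=> _ _; rewrite /corr big_nil.
move=> [eq_Sv] [eq_vc]; rewrite /signs !zipwith_cons corr_cons -/(signs _ _) IH //= !natrD.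
by case: (s); case: (x); case: (y); rewrite /= ?expr0 ?expr1; lia.
Qed.

Lemma rm1_row_step m S v : size S = (2 ^ m.+1)%N -> size v = (2 ^ m.+1)%N ->
  exists2 c, inRM 1 m.+1 c &
    (count id S <= (count id (andw S (eqw v c))).*2)%N /\
    (count id S <= ((count id (andw S (eqw v c))).*2 - count id S) ^ 2)%N.
Proof.
move=> sz_S sz_v; have sz_signs : size (signs S v) = (2 ^ m.+1)%N.
  by rewrite size_zipwith sz_S sz_v minnn.
have [s le_S_corr] : exists s, (count id S)%:R <= corr (signs S v) (lin m.+1 s) ^+ 2.
  apply: (@exists_ge_mean _ _ (bitseqs m.+1)); first by rewrite size_bitseqs expn_gt0.
  by rewrite (parseval sz_signs) sumsq_signs ?sz_S ?sz_v // size_bitseqs.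
pose b := corr (signs S v) (lin m.+1 s) < 0.
have corr_ge0 : 0 <= corr (signs S v) (map (addb b) (lin m.+1 s)).
  by rewrite corr_addb /b; case: ltrP; rewrite /= ?expr0 ?expr1 ?mul1r ?mulN1r; lia.
exists (map (addb b) (lin m.+1 s)); first exact: inRM1_affine.
have sq_corr : corr (signs S v) (map (addb b) (lin m.+1 s)) ^+ 2 =
                corr (signs S v) (lin m.+1 s) ^+ 2.
  by rewrite corr_addb exprMn sqrr_sign mul1r.
rewrite -sq_corr in le_S_corr.
rewrite corr_signs ?sz_S ?sz_v ?size_map ?size_lin // expr2 in le_S_corr corr_ge0.
rewrite /= -mul2n (expnS _ 1) expn1.
by move: (count id S) (count id (andw _ _)) => s0 a in le_S_corr corr_ge0 *; split; nia.
Qed.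

End WalshHadamard.

Section Bounds.
Local Open Scope R_scope.

Lemma INR_exp2 k : INR (2 ^ k) = 2 ^ k.
Proof. by elim: k => [|k IH] //; rewrite expnS mult_INR IH. Qed.

Lemma pow2_ge1 k : 1 <= 2 ^ k.
Proof. by rewrite -INR_exp2; apply: (le_INR 1); apply/leP; rewrite expn_gt0. Qed.

Lemma sqrt_le_gain (s a : nat) : (s <= a.*2)%N -> (s <= (a.*2 - s) ^ 2)%N ->
  INR s + sqrt (INR s) <= 2 * INR a.
Proof.
move=> le_s_2a /leP/le_INR; rewrite (expnS _ 1) expn1 mult_INR minus_INR; last exact/leP.
rewrite -mul2n mult_INR /= => le_s_sq.
have : INR s <= INR a.*2 by apply/le_INR/leP.
rewrite -mul2n mult_INR /= => {}le_s_2a.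
suff : sqrt (INR s) <= 2 * INR a - INR s by lra.
rewrite -(sqrt_square (2 * INR a - INR s)); last lra.
exact: sqrt_le_1_alt.
Qed.

Definition greedy_bound (s : R) (k : nat) : R := (s + sqrt (s * (2 ^ k - 1))) / 2 ^ k.

Lemma greedy_bound0 s : greedy_bound s 0 = s.
Proof. by rewrite /greedy_bound /= Rminus_diag Rmult_0_r sqrt_0; field. Qed.

Lemma greedy_bound_step s s1 k : 0 <= s -> s + sqrt s <= 2 * s1 ->
  greedy_bound s k.+1 <= greedy_bound s1 k.
Proof.
rewrite /greedy_bound /= => s_ge0 gain; have q_ge1 := pow2_ge1 k.
move: (2 ^ k) q_ge1 => q q_ge1.
have s1_ge0 : 0 <= s1 by have := sqrt_pos s; lra.
have sqrt_s := sqrt_sqrt s s_ge0.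
have sqrt_A := sqrt_sqrt (s1 * (q - 1)) ltac:(nra).
have sqrt_B := sqrt_sqrt (s * (2 * q - 1)) ltac:(nra).
have := sqrt_pos s; have := sqrt_pos (s1 * (q - 1)); have := sqrt_pos (s * (2 * q - 1)).
move: (sqrt s) (sqrt (s1 * (q - 1))) (sqrt (s * (2 * q - 1))) sqrt_s sqrt_A sqrt_B gain.
move=> a A B sqrt_s sqrt_A sqrt_B gain B_ge0 A_ge0 a_ge0.
(* B^2 = s (2q - 1) <= s + 4 s1 (q - 1) <= (a + 2A)^2, as s <= 2 s1. *)
have le_B : B <= a + 2 * A by nra.
apply: (Rmult_le_reg_r (2 * q)); first lra.
have -> : (s + B) / (2 * q) * (2 * q) = s + B by field; lra.
have -> : (s1 + A) / q * (2 * q) = 2 * s1 + 2 * A by field; lra.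
lra.
Qed.

Definition rm_bound (t r m : nat) : R := 2 ^ m / 2 ^ t + sqrt (2 ^ t - 1) / 2 ^ t * INR 'C(m, r).

Lemma rm_bound0 r m : rm_bound 0 r m = 2 ^ m.
Proof. by rewrite /rm_bound /= Rminus_diag sqrt_0; field. Qed.

Lemma rm_bound_pascal t r m : rm_bound t r.+1 m.+1 = rm_bound t r.+1 m + rm_bound t r m.
Proof. by rewrite /rm_bound binS plus_INR /=; field; have := pow2_ge1 t; lra. Qed.

Lemma sqrt_pow2_pred_le t : sqrt (2 ^ t - 1) <= 2 ^ t - 1.
Proof.
case: t => [|t]; first by rewrite /= Rminus_diag sqrt_0; lra.
have y_ge1 : 1 <= 2 ^ t.+1 - 1 by have := pow2_ge1 t; rewrite /=; lra.
have := sqrt_sqrt _ (Rle_trans _ _ _ Rle_0_1 y_ge1); have := sqrt_pos (2 ^ t.+1 - 1).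
move: (sqrt _) => y; nra.
Qed.

Lemma rm_bound_diag t m : rm_bound t m m <= 2 ^ m.
Proof.
rewrite /rm_bound binn /=; have := sqrt_pow2_pred_le t; have := sqrt_pos (2 ^ t - 1).
have := pow2_ge1 t; have := pow2_ge1 m.
move: (2 ^ t) (2 ^ m) (sqrt _) => q n y q_ge1 n_ge1 y_ge0 y_le.
apply: (Rmult_le_reg_r q); first lra.
have -> : (n / q + y / q * 1) * q = n + y by field; lra.
nra.
Qed.

Lemma rm_bound1_le_greedy t m : (m * m <= 2 ^ m)%N -> rm_bound t 1 m <= greedy_bound (2 ^ m) t.
Proof.
move=> /leP/le_INR; rewrite mult_INR INR_exp2 => le_mm.
rewrite /rm_bound /greedy_bound bin1 sqrt_mult; [|apply: pow_le; lra|by have := pow2_ge1 t; lra].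
have m_le : INR m <= sqrt (2 ^ m).
  by rewrite -(sqrt_square (INR m)); [apply: sqrt_le_1_alt | apply: pos_INR].
have := sqrt_pos (2 ^ t - 1); have := pow2_ge1 t.
move: (2 ^ t) (sqrt (2 ^ t - 1)) => q y q_ge1 y_ge0.
apply: (Rmult_le_reg_r q); first lra.
have -> : (2 ^ m / q + y / q * INR m) * q = 2 ^ m + y * INR m by field; lra.
have -> : (2 ^ m + sqrt (2 ^ m) * y) / q * q = 2 ^ m + sqrt (2 ^ m) * y by field; lra.
nra.
Qed.

(* For m = 3 the bound needs the integrality of the first agreement count:
   8 + sqrt 8 <= 2 s1 forces s1 >= 6. *)
Lemma rm_bound13_le_greedy t s1 : 6 <= s1 -> rm_bound t.+1 1 3 <= greedy_bound s1 t.
Proof.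
move=> s1_ge6; rewrite /rm_bound /greedy_bound bin1 /=.
have q_ge1 := pow2_ge1 t; move: (2 ^ t) q_ge1 => q q_ge1.
have le_x : sqrt (6 * (q - 1)) <= sqrt (s1 * (q - 1)) by apply: sqrt_le_1_alt; nra.
have := sqrt_sqrt (6 * (q - 1)) ltac:(nra); have := sqrt_pos (6 * (q - 1)).
have := sqrt_sqrt (2 * q - 1) ltac:(nra); have := sqrt_pos (2 * q - 1).
move: le_x; move: (sqrt (6 * _)) (sqrt (s1 * _)) (sqrt (2 * q - 1)).
move=> x x' y le_x y_ge0 yy x_ge0 xx.
have le_3y : 3 * y <= 4 + 2 * x by nra.
apply: (Rmult_le_reg_r (2 * q)); first lra.
have -> : (2 * (2 * (2 * 1)) / (2 * q) + y / (2 * q) * (1 + 1 + 1)) * (2 * q) = 8 + 3 * y.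
  by field; lra.
have -> : (s1 + x') / q * (2 * q) = 2 * (s1 + x') by field; lra.
lra.
Qed.

End Bounds.

Fixpoint agree (S : seq bool) (vs cs : seq (seq bool)) : seq bool :=
  match vs, cs with
  | v :: vs', c :: cs' => agree (andw S (eqw v c)) vs' cs'
  | _, _ => S
  end.

Lemma size_agree n S vs cs : size S = n -> sized n vs -> sized n cs -> size (agree S vs cs) = n.
Proof.
elim: vs cs S => [|v vs IH] [|c cs] S //= sz_S /andP [/eqP sz_v sz_vs] /andP [/eqP sz_c sz_cs].
by apply: IH => //; rewrite !size_zipwith sz_S sz_v sz_c !minnn.
Qed.

Lemma agree_cat h k S1 S2 vs us xs : size S1 = h -> size S2 = k ->
  sized (h + k) vs -> sized h us -> sized k xs -> size vs = size us -> size us = size xs ->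
  agree (S1 ++ S2) vs (zipwith cat us xs) =
  agree S1 (map (take h) vs) us ++ agree S2 (map (drop h) vs) xs.
Proof.
elim: vs us xs S1 S2 => [|v vs IH] [|u us] [|x xs] S1 S2 //; rewrite zipwith_cons /=.
move=> sz_S1 sz_S2 /andP [/eqP sz_v sz_vs] /andP [/eqP sz_u sz_us] /andP [/eqP sz_x sz_xs].
move=> [eq_vu] [eq_ux]; have sz_tv : size (take h v) = h by rewrite size_takel // sz_v leq_addr.
rewrite -{1}(cat_take_drop h v) zipwith_cat ?sz_tv ?sz_u //.
rewrite zipwith_cat ?size_zipwith ?sz_tv ?sz_u ?sz_S1 ?minnn //.
apply: IH => //; rewrite !size_zipwith ?sz_tv ?sz_u ?sz_S1 ?minnn //.
by rewrite size_drop sz_v addKn sz_x sz_S2 !minnn.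
Qed.

Lemma agree_xorw n S vs us ws : sized n vs -> sized n us -> sized n ws ->
  size vs = size us -> size us = size ws ->
  agree S vs (zipwith xorw us ws) = agree S (zipwith xorw vs us) ws.
Proof.
elim: vs us ws S => [|v vs IH] [|u us] [|w ws] S //; rewrite !zipwith_cons /=.
move=> /andP [/eqP sz_v sz_vs] /andP [/eqP sz_u sz_us] /andP [/eqP sz_w sz_ws] [eq_vu] [eq_uw].
by rewrite eqw_xorwr ?sz_v ?sz_u ?sz_w // IH.
Qed.

Lemma agree_refl S vs : sized (size S) vs -> agree S vs vs = S.
Proof.
elim: vs S => [|v vs IH] S //= /andP [/eqP sz_v sz_vs].
by rewrite eqw_refl sz_v andw_true IH.
Qed.

Lemma nth_agree n S vs cs j : size S = n -> sized n vs -> sized n cs -> size vs = size cs ->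
  j < n -> nth false (agree S vs cs) j =
  nth false S j && all (fun p => nth false p.1 j == nth false p.2 j) (zip vs cs).
Proof.
elim: vs cs S => [|v vs IH] [|c cs] S //=; first by rewrite andbT.
move=> sz_S /andP [/eqP sz_v sz_vs] /andP [/eqP sz_c sz_cs] [eq_vc] lt_jn.
rewrite IH ?size_zipwith ?sz_S ?sz_v ?sz_c ?minnn //.
rewrite (nth_zipwith _ false false) ?(nth_zipwith _ false false) //.
  by rewrite andbA.
all: by rewrite ?size_zipwith ?sz_S ?sz_v ?sz_c ?minnn.
Qed.

Section Agreement.
Local Open Scope R_scope.

Lemma rm1_greedy m S vs : size S = (2 ^ m.+1)%N -> sized (2 ^ m.+1) vs ->
  exists cs, [/\ size cs = size vs, all (inRM 1 m.+1) cs &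
    greedy_bound (INR (count id S)) (size vs) <= INR (count id (agree S vs cs))].
Proof.
elim: vs S => [|v vs IH] S sz_S /=.
  by exists [::]; split => //; rewrite greedy_bound0; apply: Rle_refl.
move=> /andP [/eqP sz_v sz_vs]; have [c RMc [gain1 gain2]] := rm1_row_step sz_S sz_v.
have sz_S1 : size (andw S (eqw v c)) = (2 ^ m.+1)%N.
  by rewrite !size_zipwith sz_S sz_v (inRM_size RMc) !minnn.
have [cs [sz_cs RMcs bound]] := IH _ sz_S1 sz_vs.
exists (c :: cs); split; [by rewrite /= sz_cs | exact/andP | ].
apply: Rle_trans bound; apply: greedy_bound_step; [exact: pos_INR | exact: sqrt_le_gain].
Qed.

Definition agreement_bound r m := forall vs, sized (2 ^ m) vs ->
  exists cs, [/\ size cs = size vs, all (inRM r m) cs &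
    rm_bound (size vs) r m <= INR (count id (agree (nseq (2 ^ m) true) vs cs))].

Lemma agreement_bound_diag m : agreement_bound m m.
Proof.
move=> vs sz_vs; exists vs; split => //.
  by apply: sub_all sz_vs => w; rewrite inRM_diag.
by rewrite agree_refl ?size_nseq // count_nseq mul1n INR_exp2; apply: rm_bound_diag.
Qed.

Lemma sq_le_exp2 n : n != 3%N -> (n * n <= 2 ^ n)%N.
Proof.
case: n => [|[|[|[|n]]]] // _; elim: n => [|n IH] //.
by rewrite expnS; have : (4 <= n.+4)%N by []; nia.
Qed.

Lemma agreement_bound_rm1 m : m != 2%N -> agreement_bound 1 m.+1.
Proof.
move=> m_neq2 vs sz_vs.
have [cs [sz_cs RMcs bound]] := rm1_greedy (size_nseq _ true) sz_vs.
exists cs; split => //; apply: Rle_trans bound.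
by rewrite count_nseq mul1n INR_exp2; apply: rm_bound1_le_greedy; apply: sq_le_exp2.
Qed.

Lemma agreement_bound_rm13 : agreement_bound 1 3.
Proof.
case=> [|v vs] /=.
  by exists [::]; split => //; rewrite rm_bound0 /=; lra.
move=> /andP [/eqP sz_v sz_vs].
have [c RMc [gain1 gain2]] := rm1_row_step (size_nseq _ true) sz_v.
have sz_S1 : size (andw (nseq (2 ^ 3) true) (eqw v c)) = (2 ^ 3)%N.
  by rewrite !size_zipwith size_nseq sz_v (inRM_size RMc) !minnn.
have [cs [sz_cs RMcs bound]] := rm1_greedy sz_S1 sz_vs.
exists (c :: cs); split; [by rewrite /= sz_cs | exact/andP | ].
apply: Rle_trans bound; apply: rm_bound13_le_greedy.
have le6 : (6 <= count id (andw (nseq (2 ^ 3) true) (eqw v c)))%N.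
  move: gain1 gain2; rewrite count_nseq mul1n -mul2n (expnS _ 1) expn1.
  by move: (count id _) => a; nia.
by apply: Rle_trans (le_INR _ _ (leP le6)); rewrite /=; lra.
Qed.

Lemma agreement_bound_plotkin r m : (r < m)%N ->
  agreement_bound r.+1 m -> agreement_bound r m -> agreement_bound r.+1 m.+1.
Proof.
move=> lt_rm boundU boundW vs.
rewrite expnS mul2n -addnn; set h := (2 ^ m)%N => sz_vs.
have [us [sz_us RMus bound_us]] := boundU _ (sized_take sz_vs).
pose rs := zipwith xorw (map (drop h) vs) us.
have [ws [sz_ws RMws bound_ws]] :=
  boundW rs (sized_xorw (sized_drop sz_vs) (sized_inRM RMus)).
rewrite size_map in sz_us bound_us.
have sz_rs : size rs = size vs by rewrite size_zipwith size_map sz_us minnn.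
rewrite sz_rs in sz_ws bound_ws.
have sz_xs : size (zipwith xorw us ws) = size us by rewrite size_zipwith sz_us sz_ws minnn.
exists (zipwith cat us (zipwith xorw us ws)); split.
- by rewrite size_zipwith sz_xs sz_us minnn.
- by apply: all_inRM_plotkin; rewrite ?sz_us ?sz_ws.
have sized_us := sized_inRM RMus; have sized_ws := sized_inRM RMws.
rewrite nseqD (@agree_cat h h) ?size_nseq ?sz_xs ?sized_xorw //.
rewrite (@agree_xorw h) ?sized_drop ?size_map ?sz_us ?sz_ws // -/rs.
by rewrite count_cat plus_INR rm_bound_pascal; apply: Rplus_le_compat.
Qed.

Theorem agreement_bound_RM r m : (1 <= r <= m)%N -> agreement_bound r m.
Proof.
elim: m r => [|m IH] r /andP [r_gt0 le_rm]; first by case: r r_gt0 le_rm.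
have [-> | neq_rm] := eqVneq r m.+1; first exact: agreement_bound_diag.
have [-> | neq_r1] := eqVneq r 1%N.
  by have [-> | neq_m2] := eqVneq m 2%N; [exact: agreement_bound_rm13 | exact: agreement_bound_rm1].
case: r r_gt0 le_rm neq_rm neq_r1 => [//|r] _ le_rm neq_rm neq_r1.
by apply: agreement_bound_plotkin; [lia | apply: IH; lia | apply: IH; lia].
Qed.

End Agreement.

Definition rows t n (v : mat t n) : seq (seq bool) := [seq tval (v i) | i <- enum 'I_t].

Lemma size_rows t n (v : mat t n) : size (rows v) = t.
Proof. by rewrite size_map size_enum_ord. Qed.

Lemma sized_rows t n (v : mat t n) : sized n (rows v).
Proof. by apply/allP => w /mapP [i _ ->]; rewrite size_tuple. Qed.

Lemma nth_rows t n (v : mat t n) (i : 'I_t) : nth [::] (rows v) i = v i.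
Proof. by rewrite (nth_map i) ?size_enum_ord // nth_ord_enum. Qed.

(* A row of [cs] of the wrong length is replaced by the row of [v]. *)
Definition mx_of_rows t n (v : mat t n) (cs : seq (seq bool)) : mat t n :=
  [ffun i => insubd (v i) (nth [::] cs i)].

Lemma mx_of_rowsE t n (v : mat t n) cs (i : 'I_t) : size cs = t -> sized n cs ->
  tval (mx_of_rows v cs i) = nth [::] cs i.
Proof.
move=> sz_cs sized_cs; rewrite ffunE insubdK //.
by apply: (allP sized_cs); rewrite mem_nth ?sz_cs.
Qed.

Lemma rows_in_mx_of_rows t m r (v : mat t (2 ^ m)) cs : size cs = t -> all (inRM r m) cs ->
  rows_in (RM r m) (mx_of_rows v cs).
Proof.
move=> sz_cs RMcs; apply/forallP => i.
rewrite unfold_in /RM mx_of_rowsE ?(sized_inRM RMcs) //.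
by apply: (allP RMcs); rewrite mem_nth ?sz_cs.
Qed.

Lemma dist_agree t n (v : mat t n) cs : size cs = t -> sized n cs ->
  dist_t v (mx_of_rows v cs) + count id (agree (nseq n true) (rows v) cs) = n.
Proof.
move=> sz_cs sized_cs.
set P := [set j : 'I_n | [forall i, tnth (v i) j == tnth (mx_of_rows v cs i) j]].
have -> : count id (agree (nseq n true) (rows v) cs) = #|P|.
  rewrite -(mkseq_nth false (agree _ _ _)) (size_agree _ (sized_rows v)) ?size_nseq //.
  rewrite /mkseq -val_enum_ord !count_map cardE /enum_mem size_filter -enumT.
  apply: eq_count => j /=.
  rewrite inE (nth_agree _ (sized_rows v)) ?size_nseq ?size_rows // nth_nseq ltn_ord /=.
  apply/(all_nthP ([::], [::]))/forallP => [agree_j i | agree_j k].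
    have := agree_j i; rewrite size_zip size_rows sz_cs minnn nth_zip ?size_rows //= nth_rows.
    by rewrite !(tnth_nth false) mx_of_rowsE // => /(_ (ltn_ord i)).
  rewrite size_zip size_rows sz_cs minnn => lt_kt; rewrite nth_zip ?size_rows //=.
  have := agree_j (Ordinal lt_kt); rewrite !(tnth_nth false) mx_of_rowsE //.
  by rewrite -(nth_rows v (Ordinal lt_kt)).
have -> : dist_t v (mx_of_rows v cs) = #|~: P|.
  by apply: eq_card => j; rewrite !inE negb_forall.
by rewrite addnC cardsC card_ord.
Qed.

Section CoveringRadius.
Local Open Scope R_scope.

Lemma Rt_le t n (C : {pred word n}) (B : R) :
  (forall v : mat t n, exists2 c, rows_in C c & INR (dist_t v c) <= B) -> INR (Rt t C) <= B.
Proof.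
move=> near_C; have [c0 _ dist_le_B] := near_C [ffun=> nseq_tuple n false].
have B_ge0 := Rle_trans _ _ _ (pos_INR _) dist_le_B.
case Rt_eq : (Rt t C) => [//|k].
have lt_k : (k < Rt t C)%N by rewrite Rt_eq.
have lt_kn : (k < n.+1)%N by rewrite -(size_iota 0 n.+1); exact: leq_trans lt_k (find_size _ _).
have : ~~ covers t C k by have := before_find 0%N lt_k; rewrite nth_iota // add0n => ->.
rewrite /covers negb_forall => /existsP [v]; rewrite negb_exists => /forallP far_v.
have [c Cc le_B] := near_C v; have := far_v c; rewrite Cc -ltnNge => lt_dist.
exact: Rle_trans (le_INR _ _ (leP lt_dist)) le_B.
Qed.

End CoveringRadius.

Theorem lemma17 (m t r : nat) (hr1 : 1 <= r) (hrm : r <= m) :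
  Rle (INR (Rt_RM t r m))
      (Rminus (Rmult (Rminus 1 (Rinv (pow 2 t))) (pow 2 m))
              (Rmult (Rdiv (sqrt (Rminus (pow 2 t) 1)) (pow 2 t))
                     (INR 'C(m, r)))).
Proof.
have -> : Rminus (Rmult (Rminus 1 (Rinv (pow 2 t))) (pow 2 m))
            (Rmult (Rdiv (sqrt (Rminus (pow 2 t) 1)) (pow 2 t)) (INR 'C(m, r))) =
          Rminus (pow 2 m) (rm_bound t r m).
  by rewrite /rm_bound; field; have := pow2_ge1 t; lra.
apply: Rt_le => v.
have [cs [sz_cs RMcs bound]] := agreement_bound_RM (introT andP (conj hr1 hrm)) (sized_rows v).
rewrite size_rows in sz_cs bound.
exists (mx_of_rows v cs); first exact: rows_in_mx_of_rows.
have /(f_equal INR) := dist_agree v sz_cs (sized_inRM RMcs).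
by rewrite plus_INR INR_exp2; lra.
Qed.
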